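(* For any sets $A_1,A_2\subset\mathbb R^n$ whose Euclidean distance $d:=\inf\{|x-z|:x\in A_1,z\in A_2\}$ is positive, $$c_\alpha(A_1)+c_\alpha(A_2)\le c_\alpha(A_1\cup A_2)\left[1+\frac{\max\{c_\alpha(A_1),c_\alpha(A_2)\}}{d^{\,n-\alpha}}\right].$$
   Context: Standing assumptions: $n\ge3$, $\alpha\in(0,2]$, and $\kappa_\alpha(x,y)=|x-y|^{\alpha-n}$ is the Riesz kernel on $\mathbb R^n$. The energy of a positive Radon measure $\mu$ is $\|\mu\|_\alpha^2=\iint\kappa_\alpha\,d\mu\,d\mu$; $\mathcal E^+_\alpha(A)$ is the set of positive measures of finite energy concentrated on $A$. The inner capacity of $A\subset\mathbb R^n$ is defined by $1/c_\alpha(A)=\inf\{\|\mu\|_\alpha^2:\ \mu\in\mathcal E^+_\alpha(A),\ \mu(\mathbb R^n)=1\}$ (with values in $[0,\infty]$). *)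

From HB Require Import structures.
From mathcomp Require Import all_boot all_order all_algebra.
From mathcomp Require Import all_classical all_reals all_analysis.
Set Implicit Arguments. Unset Strict Implicit. Unset Printing Implicit Defensive.
Import Order.TTheory GRing.Theory Num.Theory.
Import numFieldNormedType.Exports.
Local Open Scope classical_set_scope.
Local Open Scope ring_scope.

(* R^n is modelled as row vectors 'rV[R]_n; [Rn R n] is the same carrier
   equipped with the Borel sigma-algebra (generated by the open sets of the
   usual topology of 'rV[R]_n, which coincides with the Euclidean one). *)
Definition Rn (R : realType) (n : nat) := g_sigma_algebraType (@open 'rV[R]_n).

Definition edist (R : realType) (n : nat) (x y : 'rV[R]_n) : R :=
  Num.sqrt (\sum_(i < n) (x ord0 i - y ord0 i) ^+ 2).

Definition riesz_kernel (R : realType) (n : nat) (alpha : R)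
  (x y : 'rV[R]_n) : \bar R :=
  if x == y then +oo%E else ((edist x y) `^ (alpha - n%:R))%:E.

Definition energy (R : realType) (n : nat) (alpha : R)
  (mu : {measure set (Rn R n) -> \bar R}) : \bar R :=
  (\int[mu]_x \int[mu]_y riesz_kernel alpha x y)%E.

(* Positive Radon measures of finite energy, concentrated on A, of unit mass. *)
Definition admissible (R : realType) (n : nat) (alpha : R) (A : set 'rV[R]_n)
  (mu : {measure set (Rn R n) -> \bar R}) : Prop :=
  [/\ (forall K : set 'rV[R]_n, compact K -> (mu K < +oo)%E),
      (energy alpha mu < +oo)%E,
      mu.-negligible (~` A : set (Rn R n)) &
      mu setT = 1%E].

Definition capacity (R : realType) (n : nat) (alpha : R) (A : set 'rV[R]_n)
  : \bar R :=
  ((ereal_inf [set energy alpha mu | mu in admissible alpha A])^-1)%E.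

Definition set_dist (R : realType) (n : nat) (A1 A2 : set 'rV[R]_n) : \bar R :=
  ereal_inf [set (edist x z)%:E | x in A1 & z in A2].

From Pilot Require Import Defs.
From HB Require Import structures.
From mathcomp Require Import all_boot all_order all_algebra.
From mathcomp Require Import all_classical all_reals all_analysis.
From mathcomp Require Import measurable_realfun ring lra.
Set Implicit Arguments. Unset Strict Implicit. Unset Printing Implicit Defensive.
Import Order.TTheory GRing.Theory Num.Theory.
Import numFieldNormedType.Exports.
Local Open Scope classical_set_scope.
Local Open Scope ring_scope.

(* Let W(A) be the minimal energy of A, the infimum of the energies of the
   admissible measures for A, so that c(A) = 1 / W(A); let d be the distance of
   A1 and A2 and D = d^(alpha - n), which bounds the Riesz kernel between points
   of A1 and of A2 since n - alpha > 0.  Given admissible measures mu1 for A1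
   and mu2 for A2 with energies e1, e2, the mixture t mu1 + s mu2 with
   t = e2 / (e1 + e2) and s = e1 / (e1 + e2) is admissible for A1 `|` A2 and has
   energy at most t^2 e1 + 2 t s D + s^2 e2.  Writing u = 1/e1 and v = 1/e2 this
   reads W(A1 `|` A2) (u + v)^2 <= (u + v) + 2 u v D, and since 2 u v <= (u + v) M
   for M = max(c(A1), c(A2)) we get u + v <= c(A1 `|` A2) (1 + M D).  Taking the
   infimum over mu1 and mu2 gives the theorem. *)

Section kernel_measurability.
Variables (R : realType) (n : nat).
Local Notation T := (Rn R n).

Lemma coord_measurable (i : 'I_n) :
  measurable_fun [set: T] (fun x : T => (x : 'rV[R]_n) ord0 i).
Proof.
apply: (measurability _ (RGenOpens.measurableE R)).
move=> _ [_ [a [b ->] <-]]; rewrite setTI; apply: sub_sigma_algebra.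
by apply: (continuousP _).1 (@coord_continuous R 1 n ord0 i) _ (interval_open _ _).
Qed.

Definition sqdist (x y : 'rV[R]_n) : R := \sum_(i < n) (x ord0 i - y ord0 i) ^+ 2.

Lemma sqdist_eq0 (x y : 'rV[R]_n) : (sqdist x y == 0) = (x == y).
Proof.
rewrite psumr_eq0; last by move=> i _; exact: sqr_ge0.
apply/idP/idP => [/allP H | /eqP ->]; last by apply/allP => j _; rewrite subrr expr0n eqxx.
by apply/eqP/rowP => j; apply/eqP; rewrite -subr_eq0 -sqrf_eq0; exact: H (mem_index_enum j).
Qed.

Lemma sqdist_measurable :
  measurable_fun [set: (T * T)%type] (fun z : (T * T)%type => sqdist z.1 z.2).
Proof.
apply: measurable_sum => i; apply: measurable_funX; apply: measurable_funB.
- exact: measurableT_comp (coord_measurable i) measurable_fst.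
- exact: measurableT_comp (coord_measurable i) measurable_snd.
Qed.

Definition riesz_profile (alpha u : R) : \bar R :=
  if u == 0 then +oo%E else ((Num.sqrt u) `^ (alpha - n%:R))%:E.

Lemma riesz_kernelE alpha (x y : 'rV[R]_n) :
  riesz_kernel alpha x y = riesz_profile alpha (sqdist x y).
Proof. by rewrite /riesz_kernel /riesz_profile sqdist_eq0. Qed.

Lemma riesz_profile_measurable alpha : measurable_fun [set: R] (riesz_profile alpha).
Proof.
apply: measurable_fun_ifT.
- exact: measurable_fun_eqr (@measurable_id _ R setT) (measurable_cst (0 : R)).
- exact: measurable_cst.
- apply/measurable_EFinP; apply: measurableT_comp (measurable_powR _) _.
  exact: continuous_measurable_fun (@sqrt_continuous R).
Qed.

Lemma riesz_kernel_measurable alpha :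
  measurable_fun [set: (T * T)%type] (fun z : (T * T)%type => riesz_kernel alpha z.1 z.2).
Proof.
rewrite (_ : (fun z => _) = riesz_profile alpha \o (fun z : (T * T)%type => sqdist z.1 z.2)).
  exact: measurableT_comp (riesz_profile_measurable alpha) sqdist_measurable.
by apply/funext => z; rewrite /= riesz_kernelE.
Qed.

End kernel_measurability.

Section partial_integral_measurability.
Context d1 d2 (T1 : measurableType d1) (T2 : measurableType d2) (R : realType).
Variable mu : {measure set T2 -> \bar R}.
Hypothesis mu_fin : fin_num_fun mu.

(* A copy of mu carrying its finite-measure structure, as Tonelli requires. *)
Definition finite_copy (A : set T2) := mu A.
HB.instance Definition _ := Measure.on finite_copy.
HB.instance Definition _ := @Measure_isFinite.Build _ T2 R finite_copy mu_fin.

Lemma measurable_partial_integral (f : (T1 * T2)%type -> \bar R) :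
  measurable_fun setT f -> (forall z, 0 <= f z)%E ->
  measurable_fun setT (fun x => \int[mu]_y f (x, y))%E.
Proof. by move=> mf f0; exact: (measurable_fun_fubini_tonelli_F (m2 := finite_copy) f mf f0). Qed.

End partial_integral_measurability.

Section mixture.
Context d (T : measurableType d) (R : realType).
Implicit Types (t s : {nonneg R}) (mu : {measure set T -> \bar R}).
Local Open Scope ereal_scope.

Definition mix (t s : {nonneg R}) (mu1 mu2 : {measure set T -> \bar R})
  : {measure set T -> \bar R} := measure_add (mscale t mu1) (mscale s mu2).

Lemma mixE t s mu1 mu2 (A : set T) :
  mix t s mu1 mu2 A = t%:num%:E * mu1 A + s%:num%:E * mu2 A.
Proof. exact: measure_addE. Qed.

Lemma integral_mix t s mu1 mu2 (f : T -> \bar R) :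
  measurable_fun setT f -> (forall x, 0 <= f x) ->
  \int[mix t s mu1 mu2]_x f x =
    t%:num%:E * \int[mu1]_x f x + s%:num%:E * \int[mu2]_x f x.
Proof.
by move=> mf f0; rewrite ge0_integral_measure_add // ?ge0_integral_mscale.
Qed.

Lemma ge0_integral_comb mu t s (f g : T -> \bar R) :
  measurable_fun setT f -> measurable_fun setT g ->
  (forall x, 0 <= f x) -> (forall x, 0 <= g x) ->
  \int[mu]_x (t%:num%:E * f x + s%:num%:E * g x) =
    t%:num%:E * \int[mu]_x f x + s%:num%:E * \int[mu]_x g x.
Proof.
move=> mf mg f0 g0; rewrite ge0_integralD //; first last.
- exact: measurable_funeM.
- by move=> x _; rewrite mule_ge0.
- exact: measurable_funeM.
- by move=> x _; rewrite mule_ge0.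
by rewrite !ge0_integralZl.
Qed.

Lemma negligible_mix t s mu1 mu2 (A : set T) :
  mu1.-negligible A -> mu2.-negligible A -> (mix t s mu1 mu2).-negligible A.
Proof.
move=> [N1 [mN1 N10 AN1]] [N2 [mN2 N20 AN2]].
have mN : measurable (N1 `&` N2) by exact: measurableI.
exists (N1 `&` N2); split => //; last by move=> x Ax; split; [exact: AN1|exact: AN2].
rewrite mixE (subset_measure0 mN mN1 (@subIsetl _ _ _) N10).
by rewrite (subset_measure0 mN mN2 (@subIsetr _ _ _) N20) !mule0 adde0.
Qed.

Lemma unit_mass_finite (mu : {measure set T -> \bar R}) :
  mu setT = 1 -> fin_num_fun mu.
Proof.
move=> mu1 A mA; rewrite ge0_fin_numE ?measure_ge0 //.
have muT : mu setT < +oo by rewrite mu1 ltry.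
by apply: le_lt_trans muT; rewrite le_measure ?inE.
Qed.

Lemma integral_le_bound (mu : {measure set T -> \bar R}) (A : set T)
  (f : T -> \bar R) (D : R) :
  (0 <= D)%R -> mu setT = 1 -> mu.-negligible (~` A) ->
  measurable_fun setT f -> (forall x, 0 <= f x) ->
  (forall x, A x -> f x <= D%:E) -> \int[mu]_x f x <= D%:E.
Proof.
move=> D0 mu1 [N [mN N0 AN]] mf f0 fD.
rewrite -[D%:E]mule1 -mu1 -integral_cst //.
apply: ae_ge0_le_integral => //.
exists N; split => // x /= nfD; apply: AN => Ax; apply: nfD => _; exact: fD.
Qed.

End mixture.

Section riesz_energy.
Variables (R : realType) (n : nat) (alpha : R).
Local Notation T := (Rn R n).
Local Notation kernel := (@riesz_kernel R n alpha).
Implicit Types (t s : {nonneg R}) (mu : {measure set T -> \bar R}).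
Local Open Scope ereal_scope.

Lemma riesz_kernel_ge0 x y : 0 <= kernel x y.
Proof. by rewrite /riesz_kernel; case: ifP => // _; rewrite lee_fin powR_ge0. Qed.

Lemma riesz_kernel_measurable_section (x : T) : measurable_fun [set: T] (kernel x).
Proof. exact: measurable_fun_pair2 x (@riesz_kernel_measurable R n alpha). Qed.

(* The Riesz potential of mu; the energy of mu is the mu-integral of its potential,
   and \int[mu] potential nu is the mutual energy of mu and nu. *)
Definition potential mu (x : T) : \bar R := \int[mu]_y kernel x y.

Lemma potential_ge0 mu x : 0 <= potential mu x.
Proof. by apply: integral_ge0 => y _; exact: riesz_kernel_ge0. Qed.

Lemma potential_measurable mu : fin_num_fun mu -> measurable_fun [set: T] (potential mu).
Proof.
move=> mu_fin.
exact: (measurable_partial_integral (T1 := T) mu_fin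
  (@riesz_kernel_measurable R n alpha) (fun z => riesz_kernel_ge0 z.1 z.2)).
Qed.

Lemma energy_ge0 mu : 0 <= energy alpha mu.
Proof. by apply: integral_ge0 => x _; exact: potential_ge0. Qed.

Lemma mutual_energy_le mu1 mu2 (A1 A2 : set T) (D : R) :
  (0 <= D)%R -> mu1 setT = 1 -> mu2 setT = 1 ->
  mu1.-negligible (~` A1) -> mu2.-negligible (~` A2) ->
  (forall x y, A1 x -> A2 y -> kernel x y <= D%:E) ->
  \int[mu1]_x potential mu2 x <= D%:E.
Proof.
move=> D0 mu1T mu2T A1full A2full kD.
apply: (integral_le_bound (A := A1)) => //.
- exact: potential_measurable (unit_mass_finite mu2T).
- exact: potential_ge0.
move=> x A1x; apply: (integral_le_bound (A := A2)) => //.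
- exact: riesz_kernel_measurable_section.
- exact: riesz_kernel_ge0.
by move=> y A2y; exact: kD.
Qed.

Lemma potential_mix t s mu1 mu2 x :
  potential (mix t s mu1 mu2) x = t%:num%:E * potential mu1 x + s%:num%:E * potential mu2 x.
Proof.
exact: integral_mix (riesz_kernel_measurable_section x) (riesz_kernel_ge0 x).
Qed.

Lemma energy_mix_le mu1 mu2 t s (e1 e2 D : R) :
  mu1 setT = 1 -> mu2 setT = 1 ->
  energy alpha mu1 <= e1%:E -> energy alpha mu2 <= e2%:E ->
  \int[mu1]_x potential mu2 x <= D%:E -> \int[mu2]_x potential mu1 x <= D%:E ->
  energy alpha (mix t s mu1 mu2) <=
    (t%:num ^+ 2 * e1 + 2 * t%:num * s%:num * D + s%:num ^+ 2 * e2)%:E.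
Proof.
move=> mu1T mu2T E1 E2 E12 E21.
have mp1 := potential_measurable (unit_mass_finite mu1T).
have mp2 := potential_measurable (unit_mass_finite mu2T).
have t0 : 0 <= t%:num%:E by rewrite lee_fin.
have s0 : 0 <= s%:num%:E by rewrite lee_fin.
have mp : measurable_fun setT
    (fun x => t%:num%:E * potential mu1 x + s%:num%:E * potential mu2 x).
  by apply: emeasurable_funD; exact: measurable_funeM.
have -> : energy alpha (mix t s mu1 mu2) = \int[mix t s mu1 mu2]_x
    (t%:num%:E * potential mu1 x + s%:num%:E * potential mu2 x).
  by apply: eq_integral => x _; exact: potential_mix.
rewrite integral_mix //; last by move=> x; rewrite adde_ge0 ?mule_ge0 ?potential_ge0.
rewrite !(ge0_integral_comb _ _ _ mp1 mp2 (@potential_ge0 mu1) (@potential_ge0 mu2)).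
apply: (@le_trans _ _ (t%:num%:E * (t%:num%:E * e1%:E + s%:num%:E * D%:E) +
    s%:num%:E * (t%:num%:E * D%:E + s%:num%:E * e2%:E))).
  by apply: leeD; apply: lee_wpmul2l => //; apply: leeD; apply: lee_wpmul2l.
by rewrite -!EFinM -!EFinD lee_fin le_eqVlt; apply/predU1l; ring.
Qed.

End riesz_energy.

Section minimal_energy.
Variables (R : realType) (n : nat) (alpha : R).
Local Notation T := (Rn R n).
Local Notation kernel := (@riesz_kernel R n alpha).
Implicit Types (A B : set 'rV[R]_n) (t s : {nonneg R}) (mu : {measure set T -> \bar R}).
Local Open Scope ereal_scope.

Lemma mix_admissible (A1 A2 : set 'rV[R]_n) mu1 mu2 t s :
  admissible alpha A1 mu1 -> admissible alpha A2 mu2 -> (t%:num + s%:num = 1)%R ->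
  energy alpha (mix t s mu1 mu2) < +oo ->
  admissible alpha (A1 `|` A2) (mix t s mu1 mu2).
Proof.
case=> radon1 _ A1full mu1T [radon2 _ A2full mu2T] ts Efin; split => //.
- move=> K cK; rewrite mixE.
  by apply: lte_add_pinfty; apply: lte_mul_pinfty; rewrite ?lee_fin ?radon1 ?radon2.
- rewrite setCU; apply: negligible_mix.
    by apply: negligibleS A1full; exact: subIsetl.
  by apply: negligibleS A2full; exact: subIsetr.
- by rewrite mixE mu1T mu2T !mule1 -EFinD ts.
Qed.

Definition min_energy A : \bar R := ereal_inf [set energy alpha mu | mu in admissible alpha A].

Lemma capacityE A : capacity alpha A = (min_energy A)^-1.
Proof. by []. Qed.

Lemma min_energy_le A mu : admissible alpha A mu -> min_energy A <= energy alpha mu.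
Proof. by move=> adm; apply: ereal_inf_lbound; exists mu. Qed.

Lemma min_energy_ge0 A : 0 <= min_energy A.
Proof. by apply/ereal_infP => _ [mu _ <-]; exact: energy_ge0. Qed.

Lemma min_energy_anti A B : A `<=` B -> min_energy B <= min_energy A.
Proof.
move=> AB; apply: ereal_inf_le_tmp => _ [mu [radon Efin Afull muT] <-]; exists mu => //.
by split => //; apply: negligibleS Afull; exact: subsetC.
Qed.

Lemma capacity_le_subset A B : A `<=` B -> capacity alpha A <= capacity alpha B.
Proof. by move=> AB; rewrite !capacityE lee_pV2 ?inE ?min_energy_ge0 ?min_energy_anti. Qed.

Lemma admissible_nonempty A mu : admissible alpha A mu -> A !=set0.
Proof.
case=> _ _ Acfull muT; apply/set0P/negP => /eqP A0.
move: Acfull; rewrite A0 setC0 => /(negligibleP _ measurableT) mu0.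
by move: muT; rewrite mu0 => /eqP; rewrite eqe eq_sym oner_eq0.
Qed.

Lemma min_energy_fin_nonempty A : min_energy A < +oo -> A !=set0.
Proof. by case/ereal_inf_lt => _ [mu adm _] _; exact: admissible_nonempty adm. Qed.

(* The real inequality behind the theorem: the mixture of admissible measures
   for A1 and A2 with weights proportional to 1/e1 and 1/e2 is admissible for
   A1 `|` A2, and bounding its energy gives, with u = 1/e1 and v = 1/e2,
   W(A1 `|` A2) (u + v)^2 <= (u + v) + 2 u v D. *)
Lemma mixture_estimate (A1 A2 : set 'rV[R]_n) mu1 mu2 (w D e1 e2 : R) :
  (0 <= D)%R -> min_energy (A1 `|` A2) = w%:E ->
  (forall x y, A1 x -> A2 y -> kernel x y <= D%:E) ->
  (forall x y, A2 x -> A1 y -> kernel x y <= D%:E) ->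
  admissible alpha A1 mu1 -> admissible alpha A2 mu2 ->
  energy alpha mu1 = e1%:E -> energy alpha mu2 = e2%:E -> (0 < e1)%R -> (0 < e2)%R ->
  (w * (e1^-1 + e2^-1) ^+ 2 <= (e1^-1 + e2^-1) + 2 * e1^-1 * e2^-1 * D)%R.
Proof.
move=> D_ge0 WE K12 K21 adm1 adm2 E1 E2 e1_gt0 e2_gt0.
have e_gt0 : (0 < e1 + e2)%R by exact: addr_gt0.
have t_ge0 : (0 <= e2 / (e1 + e2))%R by rewrite divr_ge0 ?ltW.
have s_ge0 : (0 <= e1 / (e1 + e2))%R by rewrite divr_ge0 ?ltW.
pose t := NngNum t_ge0; pose s := NngNum s_ge0.
have ts : (t%:num + s%:num = 1)%R by rewrite /= -mulrDl addrC divff ?gt_eqF.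
case: (adm1) => _ _ A1full mu1T; case: (adm2) => _ _ A2full mu2T.
have E1_le : energy alpha mu1 <= e1%:E by rewrite E1.
have E2_le : energy alpha mu2 <= e2%:E by rewrite E2.
have Emix := energy_mix_le t s mu1T mu2T E1_le E2_le
  (mutual_energy_le D_ge0 mu1T mu2T A1full A2full K12)
  (mutual_energy_le D_ge0 mu2T mu1T A2full A1full K21).
have := min_energy_le (mix_admissible adm1 adm2 ts (le_lt_trans Emix (ltry _))).
move=> /le_trans /(_ Emix); rewrite WE lee_fin /= => wE.
have uv_gt0 : (0 < (e1^-1 + e2^-1) ^+ 2)%R by rewrite exprn_gt0 // addr_gt0 ?invr_gt0.
apply: le_trans (ler_wpM2r (ltW uv_gt0) wE) _.
by rewrite le_eqVlt; apply/predU1l; field; rewrite !gt_eqF.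
Qed.

End minimal_energy.

Section distance.
Variables (R : realType) (n : nat).
Local Notation edist := (@Defs.edist R n).
Implicit Types x y z : 'rV[R]_n.

Lemma edistC x y : edist x y = edist y x.
Proof. by rewrite /Defs.edist; congr Num.sqrt; apply: eq_bigr => i _; rewrite -sqrrN opprB. Qed.

Lemma edist_xx x : edist x x = 0.
Proof. by rewrite /Defs.edist big1 ?sqrtr0 // => i _; rewrite subrr expr0n. Qed.

Lemma set_dist_le (A1 A2 : set 'rV[R]_n) x z :
  A1 x -> A2 z -> (set_dist A1 A2 <= (edist x z)%:E)%E.
Proof. by move=> A1x A2z; apply: ereal_inf_lbound; exists x => //; exists z. Qed.

Lemma riesz_kernel_le_dist (alpha del : R) x y :
  0 < del -> 0 < n%:R - alpha -> del <= edist x y ->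
  (riesz_kernel alpha x y <= ((del `^ (n%:R - alpha))^-1)%:E)%E.
Proof.
move=> del_gt0 p_gt0 del_le; have dxy_gt0 := lt_le_trans del_gt0 del_le.
rewrite /riesz_kernel; case: eqP => [xy|_]; first by rewrite xy edist_xx ltxx in dxy_gt0.
rewrite lee_fin -opprB powRN lef_pV2 ?posrE ?powR_gt0 //.
by apply: ge0_ler_powR => //; rewrite ?nnegrE; exact: ltW.
Qed.

End distance.

(* If w (u + v)^2 <= (u + v) + 2 u v D and u, v <= M, then
   u + v <= (1 + M D) / w, because 2 u v <= (u + v) M. *)
Lemma quadratic_step (R : realFieldType) (w u v M D : R) :
  0 < w -> 0 < u -> 0 < v -> u <= M -> v <= M -> 0 <= D ->
  w * (u + v) ^+ 2 <= (u + v) + 2 * u * v * D -> u + v <= w^-1 * (1 + M * D).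
Proof.
move=> w_gt0 u_gt0 v_gt0 uM vM D_ge0 quad.
have uv_gt0 : 0 < u + v by exact: addr_gt0.
have cross : 2 * u * v * D <= (u + v) * M * D.
  apply: ler_wpM2r => //.
  have : u * v <= u * M by apply: ler_wpM2l => //; exact: ltW.
  have : u * v <= v * M by rewrite mulrC; apply: ler_wpM2l => //; exact: ltW.
  lra.
have : w * (u + v) <= 1 + M * D.
  by rewrite -(ler_pM2l uv_gt0); move: quad; rewrite expr2; lra.
by rewrite ler_pdivlMl // mulrC.
Qed.

Lemma inv_inf_le (R : realType) (S : set \bar R) (w c : R) :
  ereal_inf S = w%:E -> 0 < w -> (forall e : R, S e%:E -> e^-1 <= c) -> w^-1 <= c.
Proof.
move=> Sw w_gt0 Sc; rewrite leNgt; apply/negP => cw.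
have winv_gt0 : 0 < w^-1 by rewrite invr_gt0.
pose b := Num.max c (w^-1 / 2).
have b_gt0 : 0 < b by rewrite lt_max; apply/orP; right; lra.
have bw : b < w^-1 by rewrite gt_max cw /=; lra.
have [y Sy ylt] : exists2 y, S y & (y < (b^-1)%:E)%E.
  by apply: ereal_inf_lt; rewrite Sw lte_fin invf_pgt ?posrE.
have wy : (w%:E <= y)%E by rewrite -Sw; exact: ereal_inf_lbound.
case: y Sy ylt wy => [e Se | _ | _ _]; last by rewrite leeNy_eq.
  rewrite lte_fin lee_fin => eb we; have e_gt0 := lt_le_trans w_gt0 we.
  have cb : c <= b by rewrite le_max lexx.
  move: eb; rewrite invf_pgt ?posrE // => be.
  by have := le_lt_trans (le_trans (Sc e Se) cb) be; rewrite ltxx.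
by rewrite ltNge leey.
Qed.

Lemma inv_inf_add_le (R : realType) (S1 S2 : set \bar R) (w1 w2 c : R) :
  ereal_inf S1 = w1%:E -> ereal_inf S2 = w2%:E -> 0 < w1 -> 0 < w2 ->
  (forall e1 e2 : R, S1 e1%:E -> S2 e2%:E -> e1^-1 + e2^-1 <= c) ->
  w1^-1 + w2^-1 <= c.
Proof.
move=> S1w S2w w1_gt0 w2_gt0 Sc.
suff : w2^-1 <= c - w1^-1 by lra.
apply: inv_inf_le S2w w2_gt0 _ => e2 S2e2.
suff : w1^-1 <= c - e2^-1 by lra.
apply: inv_inf_le S1w w1_gt0 _ => e1 S1e1.
by have := Sc e1 e2 S1e1 S2e2; lra.
Qed.

Section capacity_estimate.
Variables (R : realType) (n : nat) (alpha : R).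
Local Notation edist := (@Defs.edist R n).

Lemma capacity_union_estimate (A1 A2 : set 'rV[R]_n) (w w1 w2 del : R) :
  0 < n%:R - alpha ->
  min_energy alpha (A1 `|` A2) = w%:E -> min_energy alpha A1 = w1%:E ->
  min_energy alpha A2 = w2%:E ->
  0 < w -> 0 < w1 -> 0 < w2 -> 0 < del ->
  (forall x z, A1 x -> A2 z -> del <= edist x z) ->
  w1^-1 + w2^-1 <= w^-1 * (1 + Num.max w1^-1 w2^-1 * (del `^ (n%:R - alpha))^-1).
Proof.
move=> p_gt0 WE W1E W2E w_gt0 w1_gt0 w2_gt0 del_gt0 del_le.
set D := (del `^ _)^-1.
have D_ge0 : 0 <= D by rewrite invr_ge0 powR_ge0.
have K12 x y : A1 x -> A2 y -> (riesz_kernel alpha x y <= D%:E)%E.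
  by move=> A1x A2y; apply: riesz_kernel_le_dist => //; exact: del_le.
have K21 x y : A2 x -> A1 y -> (riesz_kernel alpha x y <= D%:E)%E.
  by move=> A2x A1y; apply: riesz_kernel_le_dist => //; rewrite edistC; exact: del_le.
apply: (inv_inf_add_le W1E W2E w1_gt0 w2_gt0) => e1 e2 [mu1 adm1 E1] [mu2 adm2 E2].
have e1_ge : w1 <= e1 by rewrite -lee_fin -W1E -E1; exact: min_energy_le.
have e2_ge : w2 <= e2 by rewrite -lee_fin -W2E -E2; exact: min_energy_le.
have e1_gt0 := lt_le_trans w1_gt0 e1_ge; have e2_gt0 := lt_le_trans w2_gt0 e2_ge.
apply: (quadratic_step w_gt0 _ _ _ _ D_ge0
  (mixture_estimate D_ge0 WE K12 K21 adm1 adm2 E1 E2 e1_gt0 e2_gt0)).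
- by rewrite invr_gt0.
- by rewrite invr_gt0.
- by rewrite le_max lef_pV2 ?posrE ?e1_ge.
- by rewrite le_max (lef_pV2 e2_gt0 w2_gt0) ?posrE ?e2_ge orbT.
Qed.

End capacity_estimate.

Lemma pos_fin_real (R : realType) (x : \bar R) :
  (0 < x)%E -> (x < +oo)%E -> exists2 r : R, 0 < r & x = r%:E.
Proof.
case: x => [r r_gt0 _ | _ | ]; first by exists r.
- by rewrite ltxx.
- by rewrite ltNge leNye.
Qed.

Lemma adde_le_mul_of_eq0 (R : realType) (a b c F : \bar R) :
  (a <= c -> b <= c -> 0 <= c -> 1 <= F -> a = 0 \/ b = 0 -> a + b <= c * F)%E.
Proof.
move=> ac bc c_ge0 F_ge1 [->|->]; rewrite ?add0e ?adde0.
  exact: le_trans bc (lee_pemulr c_ge0 F_ge1).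
exact: le_trans ac (lee_pemulr c_ge0 F_ge1).
Qed.

(* The theorem when A1 `|` A2 has positive and A1, A2 have finite minimal
   energy: all quantities are then positive reals (A1 and A2 are nonempty, so
   their distance is finite) and the real estimate applies. *)
Lemma capacity_union_fin (R : realType) (n : nat) (alpha : R) (A1 A2 : set 'rV[R]_n) :
  0 < n%:R - alpha -> (0 < set_dist A1 A2)%E ->
  (0 < min_energy alpha (A1 `|` A2))%E ->
  (min_energy alpha A1 < +oo)%E -> (min_energy alpha A2 < +oo)%E ->
  (capacity alpha A1 + capacity alpha A2 <=
   capacity alpha (A1 `|` A2) *
     (1 + maxe (capacity alpha A1) (capacity alpha A2) /
            poweR (set_dist A1 A2) (n%:R - alpha)))%E.
Proof.
move=> p_gt0 d_gt0 W_gt0 W1_fin W2_fin; rewrite !capacityE.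
have W_W1 : (min_energy alpha (A1 `|` A2) <= min_energy alpha A1)%E.
  exact/min_energy_anti/subsetUl.
have W_W2 : (min_energy alpha (A1 `|` A2) <= min_energy alpha A2)%E.
  exact/min_energy_anti/subsetUr.
have [w w_gt0 WE] := pos_fin_real W_gt0 (le_lt_trans W_W1 W1_fin).
have [w1 w1_gt0 W1E] := pos_fin_real (lt_le_trans W_gt0 W_W1) W1_fin.
have [w2 w2_gt0 W2E] := pos_fin_real (lt_le_trans W_gt0 W_W2) W2_fin.
have [x A1x] := min_energy_fin_nonempty W1_fin.
have [z A2z] := min_energy_fin_nonempty W2_fin.
have [del del_gt0 dE] := pos_fin_real d_gt0 (le_lt_trans (set_dist_le A1x A2z) (ltry _)).
have del_le x' z' : A1 x' -> A2 z' -> del <= Defs.edist x' z'.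
  by move=> A1x' A2z'; rewrite -lee_fin -dE; exact: set_dist_le.
rewrite WE W1E W2E dE poweR_EFin !inver !gt_eqF ?powR_gt0 //.
rewrite -EFin_max -!EFinM -!EFinD lee_fin.
exact: (capacity_union_estimate p_gt0 WE W1E W2E w_gt0 w1_gt0 w2_gt0 del_gt0 del_le).
Qed.

(* Main theorem.  If c(A1) or c(A2) vanishes the claim follows from monotonicity
   of capacity, and if c(A1 `|` A2) is infinite the right-hand side is +oo;
   otherwise capacity_union_fin applies. *)
Theorem mainTheorem5 (R : realType) (n : nat) (alpha : R)
  (hn : (3 <= n)%N) (halpha : 0 < alpha <= 2)
  (A1 A2 : set 'rV[R]_n) (hd : (0 < set_dist A1 A2)%E) :
  (capacity alpha A1 + capacity alpha A2 <=
   capacity alpha (A1 `|` A2) *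
     (1 + maxe (capacity alpha A1) (capacity alpha A2) /
            poweR (set_dist A1 A2) (n%:R - alpha)))%E.
Proof.
have p_gt0 : 0 < n%:R - alpha.
  have : 3%:R <= n%:R :> R by rewrite ler_nat.
  by case/andP: halpha => _; lra.
have c1_le : (capacity alpha A1 <= capacity alpha (A1 `|` A2))%E.
  exact/capacity_le_subset/subsetUl.
have c2_le : (capacity alpha A2 <= capacity alpha (A1 `|` A2))%E.
  exact/capacity_le_subset/subsetUr.
have c_ge0 : (0 <= capacity alpha (A1 `|` A2))%E by rewrite inve_ge0 min_energy_ge0.
have F_ge1 : (1 <= 1 + maxe (capacity alpha A1) (capacity alpha A2) /
                          poweR (set_dist A1 A2) (n%:R - alpha))%E.
  by rewrite leeDl // mule_ge0 ?inve_ge0 ?poweR_ge0 // le_max inve_ge0 min_energy_ge0.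
have [W1oo|W1_fin] := eqVneq (min_energy alpha A1) +oo%E.
  by apply: adde_le_mul_of_eq0 => //; left; rewrite capacityE W1oo.
have [W2oo|W2_fin] := eqVneq (min_energy alpha A2) +oo%E.
  by apply: adde_le_mul_of_eq0 => //; right; rewrite capacityE W2oo.
move: (min_energy_ge0 alpha (A1 `|` A2)); rewrite le_eqVlt => /predU1P[W0|W_gt0].
  by rewrite !capacityE -W0 inve0 gt0_mulye ?leey // (lt_le_trans lte01 F_ge1).
by apply: capacity_union_fin; rewrite ?ltey.
Qed.
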